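(* Let $F$ be a semi-flow on a connected metrizable space $X$ and let $S$ be an $F$-stream. Then, for every $x\in X$: (1) $\mathrm{Down}_S(x)\supset\mathcal{O}_F(x)\cup\mathrm{Down}_S(\Omega_F(x))$; (2) $\mathrm{Down}_S(x)\supset\mathcal{O}_F(x)\cup\mathrm{Down}_S(y)$ for all $y\in\mathcal{O}_F(x)$.
   Context: A semi-flow on $X$ is a continuous map $F:\mathbb{T}\times X\to X$, $(t,x)\mapsto F^t(x)$, where $\mathbb{T}=\{0,1,2,\dots\}$ or $[0,\infty)$, with $F^0=\mathrm{id}$ and $F^{t_1+t_2}=F^{t_2}\circ F^{t_1}$. Put $\mathcal{O}_F(x)=\{F^t(x):t\in\mathbb{T}\}$ and $\mathcal{O}_F=\{(x,y):y\in\mathcal{O}_F(x)\}$. $\Omega_F(x)$ is the set of limits of $F^{t_n}(x)$ with $t_n\to\infty$. An $F$-stream is a reflexive, transitive relation $S\subset X\times X$ that is closed in $X\times X$ and contains $\mathcal{O}_F$. $\mathrm{Down}_S(x)=\{y:(x,y)\in S\}$ and $\mathrm{Down}_S(M)=\bigcup_{z\in M}\mathrm{Down}_S(z)$. *)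

From mathcomp Require Import all_boot all_order all_algebra.
From mathcomp Require Import all_classical all_reals all_analysis.
From Stdlib Require Import Rdefinitions.
From mathcomp Require Import Rstruct Rstruct_topology.
Set Implicit Arguments. Unset Strict Implicit. Unset Printing Implicit Defensive.
Import Order.TTheory GRing.Theory Num.Theory.
Local Open Scope classical_set_scope.
Local Open Scope ring_scope.

Definition metrizable (X : topologicalType) : Prop :=
  exists d : X -> X -> R,
    (forall x y, 0 <= d x y) /\
    (forall x y, d x y = 0 <-> x = y) /\
    (forall x y, d x y = d y x) /\
    (forall x y z, d x z <= d x y + d y z) /\
    (forall A : set X, open A <->
       (forall x, A x -> exists2 e : R, 0 < e & [set y | d x y < e] `<=` A)).

Definition time_domain (discrete : bool) : set R :=
  if discrete then [set t | exists n : nat, t = n%:R] else [set t | 0 <= t].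

(* F : T x X -> X is a semi-flow; F is given on R x X but only its
   restriction to T x X matters. *)
Definition semiflow (discrete : bool) (X : topologicalType) (F : R -> X -> X) : Prop :=
  {within time_domain discrete `*` [set: X], continuous (fun p : R * X => F p.1 p.2)} /\
  (forall x, F 0 x = x) /\
  (forall t1 t2 x, time_domain discrete t1 -> time_domain discrete t2 ->
     F (t1 + t2) x = F t2 (F t1 x)).

Definition sf_orbit (discrete : bool) (X : topologicalType) (F : R -> X -> X) (x : X) : set X :=
  [set y | exists2 t, time_domain discrete t & y = F t x].

Definition orbit_rel (discrete : bool) (X : topologicalType) (F : R -> X -> X) : set (X * X) :=
  [set p | sf_orbit discrete F p.1 p.2].

Definition omega_limit (discrete : bool) (X : topologicalType) (F : R -> X -> X) (x : X) : set X :=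
  [set y | exists t : nat -> R,
      (forall n, time_domain discrete (t n)) /\
      (t n @[n --> \oo] --> +oo) /\
      (F (t n) x @[n --> \oo] --> y)].

Definition stream (discrete : bool) (X : topologicalType) (F : R -> X -> X) (S : set (X * X)) : Prop :=
  (forall x, S (x, x)) /\
  (forall x y z, S (x, y) -> S (y, z) -> S (x, z)) /\
  closed S /\
  orbit_rel discrete F `<=` S.

Definition Down (X : Type) (S : set (X * X)) (x : X) : set X := [set y | S (x, y)].
Definition DownSet (X : Type) (S : set (X * X)) (M : set X) : set X :=
  [set y | exists2 z, M z & S (z, y)].

From mathcomp Require Import all_boot all_order all_algebra.
From mathcomp Require Import all_classical all_reals all_analysis.
From Stdlib Require Import Rdefinitions.
From mathcomp Require Import Rstruct Rstruct_topology.
Set Implicit Arguments. Unset Strict Implicit. Unset Printing Implicit Defensive.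
Local Open Scope classical_set_scope.

(* Down_S(x) contains O_F(x), and it is closed because S is, so it contains
   the closure of O_F(x) and in particular Omega_F(x); transitivity of S then
   absorbs Down_S of any subset of Down_S(x). *)

Section Down.
Variables (X : topologicalType) (S : set (X * X)).

Lemma closed_Down (x : X) : closed S -> closed (Down S x).
Proof.
move=> Scl; apply: (preimage_closed (f := pair x)) => // y _.
by apply: cvg_pair; [exact: cvg_cst | exact: cvg_id].
Qed.

Lemma DownSetS (M N : set X) : M `<=` N -> DownSet S M `<=` DownSet S N.
Proof. by move=> MN y [z Mz Szy]; exists z; first exact: MN. Qed.

Lemma DownSet_Down (x : X) :
  (forall a b c, S (a, b) -> S (b, c) -> S (a, c)) ->
  DownSet S (Down S x) `<=` Down S x.
Proof. by move=> Str y [z Sxz Szy]; exact: Str Sxz Szy. Qed.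

End Down.

Section Orbits.
Variables (discrete : bool) (X : topologicalType) (F : R -> X -> X).

Lemma sf_orbit_sub_Down (S : set (X * X)) (x : X) :
  orbit_rel discrete F `<=` S -> sf_orbit discrete F x `<=` Down S x.
Proof. by move=> Sorb y Oy; exact: Sorb. Qed.

Lemma omega_limit_sub_closure (x : X) :
  omega_limit discrete F x `<=` closure (sf_orbit discrete F x).
Proof.
move=> y [t [tT [_ Ftx_y]]].
apply: (closed_cvg _ (@closed_closure _ _) _ _ Ftx_y).
by apply: nearW => n; apply: subset_closure; exists (t n).
Qed.

End Orbits.

Theorem proposition18 (discrete : bool) (X : topologicalType) (F : R -> X -> X)
    (S : set (X * X)) :
  connected [set: X] -> metrizable X ->
  semiflow discrete F -> stream discrete F S ->
  forall x : X,
    (sf_orbit discrete F x `|` DownSet S (omega_limit discrete F x) `<=` Down S x) /\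
    (forall y, sf_orbit discrete F x y ->
       sf_orbit discrete F x `|` Down S y `<=` Down S x).
Proof.
move=> _ _ _ [_ [Str [Scl Sorb]]] x.
have orbit_Down : sf_orbit discrete F x `<=` Down S x := sf_orbit_sub_Down Sorb.
have omega_Down : omega_limit discrete F x `<=` Down S x.
  rewrite [Down S x](closure_id _).1; last exact: closed_Down.
  exact: subset_trans (@omega_limit_sub_closure _ _ F x) (closureS orbit_Down).
split=> [|y Oy] z [Oz|Sz].
- exact: orbit_Down.
- by apply: DownSet_Down Str _ _; exact: DownSetS omega_Down _ Sz.
- exact: orbit_Down.
- by apply: DownSet_Down Str _ _; exists y; first exact: orbit_Down.
Qed.
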